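(* Let $\kappa_i,\theta_i,\sigma_i>0$ and $\varepsilon_i\ge0$ for $i=1,2$, and let $\gamma\in[-\sqrt{\varepsilon_1\varepsilon_2},\sqrt{\varepsilon_1\varepsilon_2}]$. Set $\beta_i=\varepsilon_i/\sigma_i^2$, $\alpha_i=\gamma/\sigma_i^2$, $\nu_i=2\kappa_i\theta_i/\sigma_i^2$. Define on $\mathbb R_+^2$ the drift $$A_1(x)=\kappa_1(1+\beta_1x_2)(\theta_1-x_1)+\kappa_2\alpha_2x_1(\theta_2-x_2),\quad A_2(x)=\kappa_2(1+\beta_2x_1)(\theta_2-x_2)+\kappa_1\alpha_1x_2(\theta_1-x_1),$$ the diffusion matrix $$S(x)=\begin{pmatrix}\sigma_1^2x_1+\varepsilon_1x_1x_2 & \gamma x_1x_2\\ \gamma x_1x_2 & \sigma_2^2x_2+\varepsilon_2x_1x_2\end{pmatrix},$$ and the probability density $\pi(x)=\pi_{\nu_1}(x_1)\pi_{\nu_2}(x_2)$, where $\pi_{\nu_i}(y)=\frac{(\nu_i/\theta_i)^{\nu_i}}{\Gamma(\nu_i)}y^{\nu_i-1}e^{-\nu_iy/\theta_i}$. Then the generator $Lf=A_1\partial_{x_1}f+A_2\partial_{x_2}f+\frac12\big[S_{11}\partial_{x_1x_1}f+2S_{12}\partial_{x_1x_2}f+S_{22}\partial_{x_2x_2}f\big]$ of the diffusion $dX=A(X)\,dt+B(X)\,dw$ (with $BB^T=S$ and $w$ a two-dimensional standard Wiener process) satisfies, for every smooth $f$ on the open quadrant $(0,\infty)^2$, $$Lf(x)=\frac{1}{2\pi(x)}\nabla\cdot\big(\pi(x)S(x)\nabla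 f(x)\big);$$ that is, the process is reversible with respect to the product of the two Gamma distributions $\pi_{\nu_1,\nu_2}$.
   Context: This is the ''asymptotically decoupling correlated'' (ADC) two-factor model; when $\varepsilon_1=\varepsilon_2=\gamma=0$ it reduces to two independent CIR processes. *)

From Stdlib Require Import Reals List.
From Coquelicot Require Import Coquelicot.
Open Scope R_scope.

Definition Gamma_fn (nu : R) : R :=
  RInt_gen (fun t => Rpower t (nu - 1) * exp (- t)) (at_right 0) (Rbar_locally p_infty).

Definition gamma_density (nu theta y : R) : R :=
  Rpower (nu / theta) nu / Gamma_fn nu * Rpower y (nu - 1) * exp (- nu * y / theta).

Definition pd1 (f : R -> R -> R) : R -> R -> R := fun x y => Derive (fun t => f t y) x.
Definition pd2 (f : R -> R -> R) : R -> R -> R := fun x y => Derive (fun t => f x t) y.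

(* Iterated partial derivative along a list of directions (false = x1, true = x2). *)
Fixpoint iter_partial (l : list bool) (f : R -> R -> R) : R -> R -> R :=
  match l with
  | nil => f
  | b :: l' => (if b then pd2 else pd1) (iter_partial l' f)
  end.

Definition quadrant (x y : R) : Prop := 0 < x /\ 0 < y.

Definition smooth_on_quadrant (f : R -> R -> R) : Prop :=
  forall (l : list bool) (x y : R), quadrant x y ->
    ex_derive (fun t => iter_partial l f t y) x /\
    ex_derive (fun t => iter_partial l f x t) y /\
    continuous (fun p : R * R => iter_partial l f (fst p) (snd p)) (x, y).

(* A drift of the form A = (1/2) (div S + S grad log pi) makes the generator the
   divergence-form operator (1/(2 pi)) div (pi S grad f): expanding the divergence by
   the product rule and using the symmetry of the mixed partials, the coefficient of
   each first derivative of f is exactly that drift.  For the product of Gamma densities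
   grad log pi = ((nu1 - 1)/x1 - nu1/th1, (nu2 - 1)/x2 - nu2/th2), and with
   nu_i = 2 k_i th_i / s_i^2 the ADC drift has this form identically in x.  The bound
   on g is only needed for S to be a covariance matrix, not for the identity.  The one
   analytic input is Gamma(nu) > 0, which makes pi nonvanishing: the Gamma integral is
   the difference of the limits at 0+ and +oo of the monotone primitive
   x |-> int_1^x t^(nu-1) e^(-t), which is bounded on both sides. *)

From Stdlib Require Import Reals List Lra Classical_Prop.
From Coquelicot Require Import Coquelicot.
Open Scope R_scope.

Lemma is_lub_approx (E : R -> Prop) (u eps : R) :
  is_lub E u -> 0 < eps -> exists z, E z /\ u - eps < z.
Proof.
  intros [_ Hleast] Heps.
  apply NNPP; intros Hno.
  enough (u <= u - eps) by lra.
  apply Hleast; intros z Hz.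
  apply Rnot_lt_le; intros Hlt; apply Hno; now exists z.
Qed.

Lemma nondecreasing_bounded_lim_p_infty (G : R -> R) (M : R) :
  (forall x y, 0 < x <= y -> G x <= G y) -> (forall x, 0 < x -> G x <= M) ->
  exists l, filterlim G (Rbar_locally p_infty) (locally l) /\
            forall x, 0 < x -> G x <= l.
Proof.
  intros Hmono Hbound.
  set (E := fun z => exists x, 0 < x /\ z = G x).
  assert (HEb : bound E) by (exists M; intros z [x [Hx ->]]; auto).
  assert (HEne : exists z, E z) by (exists (G 1), 1; split; [lra | reflexivity]).
  destruct (completeness E HEb HEne) as [u Hu].
  assert (Hup : forall x, 0 < x -> G x <= u) by (intros x Hx; apply Hu; now exists x).
  exists u; split; [| exact Hup].
  apply filterlim_locally; intros eps.
  destruct (is_lub_approx E u eps Hu (cond_pos eps)) as [z [[x0 [Hx0 ->]] Hlt]].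
  exists x0; intros y Hy.
  assert (G x0 <= G y) by (apply Hmono; lra).
  assert (G y <= u) by (apply Hup; lra).
  change (Rabs (G y - u) < eps); apply Rabs_lt_between; lra.
Qed.

Lemma nondecreasing_bounded_lim_at_right_0 (G : R -> R) (m : R) :
  (forall x y, 0 < x <= y -> G x <= G y) -> (forall x, 0 < x -> m <= G x) ->
  exists l, filterlim G (at_right 0) (locally l) /\ forall x, 0 < x -> l <= G x.
Proof.
  intros Hmono Hbound.
  destruct (nondecreasing_bounded_lim_p_infty (fun t => - G (/ t)) (- m)) as [l [Hl Hle]].
  - intros x y Hxy.
    assert (G (/ y) <= G (/ x)); [|lra].
    apply Hmono; split; [apply Rinv_0_lt_compat; lra | apply Rinv_le_contravar; lra].
  - intros x Hx. assert (m <= G (/ x)) by (apply Hbound, Rinv_0_lt_compat, Hx). lra.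
  - exists (- l); split.
    + apply (filterlim_ext_loc (fun x => - (- G (/ / x)))).
      * exists (mkposreal 1 Rlt_0_1); intros x _ Hx.
        rewrite Rinv_inv; ring.
      * apply (filterlim_comp _ _ _ (fun x => - G (/ / x)) Ropp _ (locally l)).
        -- exact (filterlim_comp _ _ _ Rinv (fun t => - G (/ t)) _ _ _ filterlim_Rinv_0_right Hl).
        -- apply (filterlim_opp l).
    + intros x Hx.
      assert (Hl_ge : - G (/ / x) <= l) by (apply Hle, Rinv_0_lt_compat, Hx).
      rewrite Rinv_inv in Hl_ge; lra.
Qed.

Lemma ln_le_sub_1 (y : R) : 0 < y -> ln y <= y - 1.
Proof.
  intros Hy; pose proof (exp_ineq1_le (ln y)) as H.
  rewrite exp_ln in H by exact Hy; lra.
Qed.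

Lemma Rmin_pos_le (a b t : R) : 0 < a -> 0 < b -> Rmin a b <= t -> 0 < t.
Proof. intros Ha Hb Ht; pose proof (Rmin_pos a b Ha Hb); lra. Qed.

Definition gamma_integrand (nu t : R) : R := Rpower t (nu - 1) * exp (- t).

Section GammaIntegral.

Variable nu : R.

Local Notation f := (gamma_integrand nu).

Lemma gamma_integrand_pos (t : R) : 0 < f t.
Proof. apply Rmult_lt_0_compat; apply exp_pos. Qed.

Lemma gamma_integrand_continuous (t : R) : 0 < t -> continuous f t.
Proof.
  intros Ht; apply (@ex_derive_continuous R_AbsRing R_NormedModule).
  unfold f, gamma_integrand, Rpower; auto_derive; lra.
Qed.

Lemma ex_RInt_gamma_integrand (a b : R) : 0 < a -> 0 < b -> ex_RInt f a b.
Proof.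
  intros Ha Hb; apply (@ex_RInt_continuous R_CompleteNormedModule).
  intros t [Ht _]; apply gamma_integrand_continuous, (Rmin_pos_le a b); assumption.
Qed.

Definition gamma_primitive (x : R) : R := RInt f 1 x.

Lemma gamma_primitive_1 : gamma_primitive 1 = 0.
Proof. exact (RInt_point 1 f). Qed.

Lemma gamma_primitive_le (x y : R) : 0 < x <= y -> gamma_primitive x <= gamma_primitive y.
Proof.
  intros Hxy; unfold gamma_primitive.
  rewrite <- (RInt_Chasles f 1 x y) by (apply ex_RInt_gamma_integrand; lra).
  assert (0 <= RInt f x y); [|unfold plus; simpl; lra].
  apply RInt_ge_0; [lra | apply ex_RInt_gamma_integrand; lra |].
  intros t _; left; apply gamma_integrand_pos.
Qed.

Lemma is_derive_gamma_primitive (x : R) : 0 < x -> is_derive gamma_primitive x (f x).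
Proof.
  intros Hx; apply (is_derive_RInt f gamma_primitive 1 x).
  - apply (filter_imp (fun u => 0 < u)); [|apply open_gt; exact Hx].
    intros u Hu; apply (RInt_correct f 1 u), ex_RInt_gamma_integrand; lra.
  - apply gamma_integrand_continuous, Hx.
Qed.

(* Below 1 the integrand is dominated by [t^(nu-1)], whose integral over [(0,1)] is [1/nu]. *)
Lemma gamma_primitive_ge (x : R) : 0 < nu -> 0 < x -> - / nu <= gamma_primitive x.
Proof.
  intros Hnu Hx.
  destruct (Rle_lt_dec x 1) as [Hx1 | Hx1].
  2: { pose proof gamma_primitive_1; pose proof (gamma_primitive_le 1 x ltac:(lra)).
       pose proof (Rinv_0_lt_compat nu Hnu); lra. }
  set (p := fun t => Rpower t (nu - 1)).
  set (P := fun t => Rpower t nu / nu).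
  assert (HP : is_RInt p x 1 (minus (P 1) (P x))).
  { apply (@is_RInt_derive R_CompleteNormedModule P p); intros t [Ht _];
      assert (0 < t) by (apply (Rmin_pos_le x 1); lra).
    - unfold P, p, Rpower; auto_derive; [lra |].
      replace ((nu - 1) * ln t) with (nu * ln t + - ln t) by ring.
      rewrite exp_plus, exp_Ropp, exp_ln by lra; field; lra.
    - apply (@ex_derive_continuous R_AbsRing R_NormedModule).
      unfold p, Rpower; auto_derive; lra. }
  assert (Hle : RInt f x 1 <= RInt p x 1).
  { apply RInt_le; [lra | apply ex_RInt_gamma_integrand; lra | eexists; exact HP |].
    intros t Ht; unfold f, gamma_integrand, p.
    rewrite <- (Rmult_1_r (Rpower t (nu - 1))) at 2.
    apply Rmult_le_compat_l; [left; apply exp_pos |].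
    rewrite <- exp_0; left; apply exp_increasing; lra. }
  rewrite (is_RInt_unique _ _ _ _ HP) in Hle; unfold minus, plus, opp in Hle; simpl in Hle.
  unfold P, Rpower at 1 in Hle; rewrite ln_1, Rmult_0_r, exp_0 in Hle.
  assert (0 < Rpower x nu / nu) by (apply Rdiv_lt_0_compat; [apply exp_pos | lra]).
  unfold gamma_primitive; rewrite <- opp_RInt_swap by (apply ex_RInt_gamma_integrand; lra).
  unfold opp; simpl; unfold Rdiv in *; lra.
Qed.

(* With [A = |nu - 1|] and [c = 2 (A + 1)], [ln t <= t / c + ln c - 1] gives
   [(nu - 1) ln t <= t / 2 + A ln c]. *)
Lemma gamma_integrand_le_exp :
  exists K, 0 < K /\ forall t, 1 <= t -> f t <= K * exp (- t / 2).
Proof.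
  set (A := Rabs (nu - 1)); set (c := 2 * (A + 1)).
  assert (HA : 0 <= A) by apply Rabs_pos.
  exists (exp (A * ln c)); split; [apply exp_pos |]; intros t Ht.
  unfold f, gamma_integrand, Rpower; rewrite <- !exp_plus.
  enough (Hexp : (nu - 1) * ln t + - t <= A * ln c + - t / 2).
  { destruct Hexp as [Hlt | ->]; [left; apply exp_increasing, Hlt | right; reflexivity]. }
  assert (Hlnt : 0 <= ln t) by (rewrite <- ln_1; apply ln_le; lra).
  assert (Hln : ln t <= t / c - 1 + ln c).
  { replace (ln t) with (ln (t / c) + ln c) by (rewrite ln_div by (unfold c; lra); ring).
    pose proof (ln_le_sub_1 (t / c) ltac:(apply Rdiv_lt_0_compat; unfold c; lra)); lra. }
  assert (Hnu : (nu - 1) * ln t <= A * ln t) by (apply Rmult_le_compat_r; [exact Hlnt | apply Rle_abs]).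
  assert (Hlin : A * (t / c) <= t / 2).
  { unfold c; apply (Rmult_le_reg_r (2 * (A + 1))); [lra |].
    field_simplify; [nra | lra]. }
  assert (A * ln t <= A * (t / c - 1 + ln c)) by (apply Rmult_le_compat_l; assumption).
  nra.
Qed.

Lemma gamma_primitive_bounded : exists M, forall x, 0 < x -> gamma_primitive x <= M.
Proof.
  destruct gamma_integrand_le_exp as [K [HK Hdom]].
  exists (2 * K); intros x Hx.
  destruct (Rle_lt_dec x 1) as [Hx1 | Hx1].
  { pose proof gamma_primitive_1; pose proof (gamma_primitive_le x 1 ltac:(lra)); lra. }
  set (p := fun t => K * exp (- t / 2)).
  set (P := fun t => - 2 * K * exp (- t / 2)).
  assert (HP : is_RInt p 1 x (minus (P x) (P 1))).
  { apply (@is_RInt_derive R_CompleteNormedModule P p); intros t _.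
    - unfold P, p; auto_derive; [exact I |].
      change (- t * / 2) with (- t / 2); field.
    - apply (@ex_derive_continuous R_AbsRing R_NormedModule).
      unfold p; auto_derive; exact I. }
  assert (Hle : RInt f 1 x <= RInt p 1 x).
  { apply RInt_le; [lra | apply ex_RInt_gamma_integrand; lra | eexists; exact HP |].
    intros t Ht; apply Hdom; lra. }
  rewrite (is_RInt_unique _ _ _ _ HP) in Hle; unfold minus, plus, opp in Hle; simpl in Hle.
  unfold P in Hle; unfold gamma_primitive.
  assert (0 < exp (- x / 2)) by apply exp_pos.
  assert (exp (- (1) / 2) < exp 0) by (apply exp_increasing; lra).
  rewrite exp_0 in *; nra.
Qed.

Lemma is_RInt_gen_gamma_integrand (l0 l1 : R) :
  filterlim gamma_primitive (at_right 0) (locally l0) ->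
  filterlim gamma_primitive (Rbar_locally p_infty) (locally l1) ->
  is_RInt_gen f (at_right 0) (Rbar_locally p_infty) (l1 - l0).
Proof.
  intros Hl0 Hl1.
  assert (Hpos : filter_prod (at_right 0) (Rbar_locally p_infty)
                   (fun ab => forall t, Rmin (fst ab) (snd ab) <= t -> 0 < t)).
  { apply (Filter_prod _ _ _ (fun a => 0 < a) (fun b => 0 < b)).
    - exists (mkposreal 1 Rlt_0_1); intros y _ Hy; exact Hy.
    - exists 0; intros y Hy; exact Hy.
    - intros a b Ha Hb t; apply (Rmin_pos_le a b t Ha Hb). }
  apply (is_RInt_gen_ext (Derive gamma_primitive)).
  { generalize Hpos; apply filter_imp; intros [a b] Hab t [Ht _].
    apply is_derive_unique, is_derive_gamma_primitive, Hab; lra. }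
  apply is_RInt_gen_Derive; [| | exact Hl0 | exact Hl1];
    generalize Hpos; apply filter_imp; intros [a b] Hab t [Ht _]; specialize (Hab t Ht).
  - eexists; apply is_derive_gamma_primitive, Hab.
  - apply (continuous_ext_loc _ f).
    + apply (filter_imp (fun u => 0 < u)); [| apply open_gt; exact Hab].
      intros u Hu; symmetry; apply is_derive_unique, is_derive_gamma_primitive, Hu.
    + apply gamma_integrand_continuous, Hab.
Qed.

End GammaIntegral.

Lemma Gamma_fn_pos (nu : R) : 0 < nu -> 0 < Gamma_fn nu.
Proof.
  intros Hnu.
  set (G := gamma_primitive nu).
  destruct (nondecreasing_bounded_lim_at_right_0 G (- / nu) (gamma_primitive_le nu)
              (fun x => gamma_primitive_ge nu x Hnu)) as [l0 [Hl0 Hl0le]].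
  destruct (gamma_primitive_bounded nu) as [M HM].
  destruct (nondecreasing_bounded_lim_p_infty G M (gamma_primitive_le nu) HM)
    as [l1 [Hl1 Hl1ge]].
  change (0 < RInt_gen (gamma_integrand nu) (at_right 0) (Rbar_locally p_infty)).
  rewrite (is_RInt_gen_unique _ _ (is_RInt_gen_gamma_integrand nu l0 l1 Hl0 Hl1)).
  assert (Hhalf : 0 < RInt (gamma_integrand nu) (1 / 2) 1).
  { apply RInt_gt_0; [lra | intros; apply gamma_integrand_pos |].
    intros t Ht; apply gamma_integrand_continuous; lra. }
  assert (G (1 / 2) = - RInt (gamma_integrand nu) (1 / 2) 1).
  { unfold G, gamma_primitive; rewrite <- opp_RInt_swap by (apply ex_RInt_gamma_integrand; lra).
    reflexivity. }
  pose proof (Hl0le (1 / 2) ltac:(lra)); pose proof (Hl1ge 1 ltac:(lra)).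
  assert (G 1 = 0) by apply gamma_primitive_1.
  lra.
Qed.

Lemma gamma_density_pos (nu th y : R) : 0 < nu -> 0 < th -> 0 < gamma_density nu th y.
Proof.
  intros Hnu Hth; unfold gamma_density.
  pose proof (Gamma_fn_pos nu Hnu).
  assert (0 < Rpower (nu / th) nu) by apply exp_pos.
  assert (0 < Rpower y (nu - 1)) by apply exp_pos.
  pose proof (exp_pos (- nu * y / th)).
  apply Rmult_lt_0_compat; [apply Rmult_lt_0_compat; [apply Rdiv_lt_0_compat |] |]; assumption.
Qed.

Lemma is_derive_gamma_density (nu th y : R) : 0 < th -> 0 < y ->
  is_derive (gamma_density nu th) y (gamma_density nu th y * ((nu - 1) / y - nu / th)).
Proof.
  intros Hth Hy; unfold gamma_density.
  (* Hide the normalising constant, which [auto_derive] cannot see through. *)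
  set (C := Rpower (nu / th) nu / Gamma_fn nu).
  unfold Rpower; auto_derive; [lra |].
  unfold Rdiv; field; lra.
Qed.

Lemma is_derive_flux (w a P b Q : R -> R) (x dw da dP db dQ : R) :
  is_derive w x dw -> is_derive a x da -> is_derive P x dP ->
  is_derive b x db -> is_derive Q x dQ ->
  is_derive (fun t => w t * (a t * P t + b t * Q t)) x
    (dw * (a x * P x + b x * Q x) + w x * (da * P x + a x * dP + (db * Q x + b x * dQ))).
Proof.
  intros Hw Ha HP Hb HQ.
  apply (is_derive_mult w (fun t => a t * P t + b t * Q t)); [exact Hw | | intros; apply Rmult_comm].
  apply (is_derive_plus (fun t => a t * P t) (fun t => b t * Q t)).
  - apply (is_derive_mult a P); [exact Ha | exact HP | intros; apply Rmult_comm].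
  - apply (is_derive_mult b Q); [exact Hb | exact HQ | intros; apply Rmult_comm].
Qed.

Lemma smooth_on_quadrant_pd_comm (f : R -> R -> R) (x1 x2 : R) :
  smooth_on_quadrant f -> quadrant x1 x2 -> pd1 (pd2 f) x1 x2 = pd2 (pd1 f) x1 x2.
Proof.
  intros hf hx; unfold pd1, pd2; apply Schwarz.
  - destruct hx as [hx1 hx2].
    exists (mkposreal _ (Rmin_pos x1 x2 hx1 hx2)); simpl; intros u v Hu Hv.
    apply Rabs_lt_between in Hu; apply Rabs_lt_between in Hv.
    pose proof (Rmin_l x1 x2); pose proof (Rmin_r x1 x2).
    assert (Huv : quadrant u v) by (split; lra).
    destruct (hf nil u v Huv) as [H1 [H2 _]].
    destruct (hf (true :: nil) u v Huv) as [H3 _].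
    destruct (hf (false :: nil) u v Huv) as [_ [H4 _]].
    repeat split; assumption.
  - apply continuity_2d_pt_filterlim, (hf (false :: true :: nil) x1 x2 hx).
  - apply continuity_2d_pt_filterlim, (hf (true :: false :: nil) x1 x2 hx).
Qed.

Lemma pd1_density_flux (p1 p2 : R -> R) (a b f : R -> R -> R) (x1 x2 l1 da db : R) :
  is_derive p1 x1 (p1 x1 * l1) ->
  is_derive (fun t => a t x2) x1 da -> is_derive (fun t => b t x2) x1 db ->
  ex_derive (fun t => pd1 f t x2) x1 -> ex_derive (fun t => pd2 f t x2) x1 ->
  pd1 (fun y1 y2 => p1 y1 * p2 y2 * (a y1 y2 * pd1 f y1 y2 + b y1 y2 * pd2 f y1 y2)) x1 x2
  = p1 x1 * p2 x2 * (l1 * (a x1 x2 * pd1 f x1 x2 + b x1 x2 * pd2 f x1 x2)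
      + da * pd1 f x1 x2 + a x1 x2 * pd1 (pd1 f) x1 x2
      + db * pd2 f x1 x2 + b x1 x2 * pd1 (pd2 f) x1 x2).
Proof.
  intros Hp1 Ha Hb Hf1 Hf2.
  assert (Hw : is_derive (fun t => p1 t * p2 x2) x1 (p1 x1 * l1 * p2 x2))
    by exact (@is_derive_scal_l R_AbsRing R_NormedModule p1 x1 _ (p2 x2) Hp1).
  etransitivity.
  { apply is_derive_unique, (is_derive_flux _ _ _ _ _ _ _ _ _ _ _ Hw Ha
      (Derive_correct _ _ Hf1 : is_derive _ _ (pd1 (pd1 f) x1 x2)) Hb
      (Derive_correct _ _ Hf2 : is_derive _ _ (pd1 (pd2 f) x1 x2))). }
  ring.
Qed.

Lemma pd2_density_flux (p1 p2 : R -> R) (a b f : R -> R -> R) (x1 x2 l2 da db : R) :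
  is_derive p2 x2 (p2 x2 * l2) ->
  is_derive (fun t => a x1 t) x2 da -> is_derive (fun t => b x1 t) x2 db ->
  ex_derive (fun t => pd1 f x1 t) x2 -> ex_derive (fun t => pd2 f x1 t) x2 ->
  pd2 (fun y1 y2 => p1 y1 * p2 y2 * (a y1 y2 * pd1 f y1 y2 + b y1 y2 * pd2 f y1 y2)) x1 x2
  = p1 x1 * p2 x2 * (l2 * (a x1 x2 * pd1 f x1 x2 + b x1 x2 * pd2 f x1 x2)
      + da * pd1 f x1 x2 + a x1 x2 * pd2 (pd1 f) x1 x2
      + db * pd2 f x1 x2 + b x1 x2 * pd2 (pd2 f) x1 x2).
Proof.
  intros Hp2 Ha Hb Hf1 Hf2.
  assert (Hw : is_derive (fun t => p1 x1 * p2 t) x2 (p1 x1 * (p2 x2 * l2)))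
    by exact (is_derive_scal p2 x2 (p1 x1) _ Hp2).
  etransitivity.
  { apply is_derive_unique, (is_derive_flux _ _ _ _ _ _ _ _ _ _ _ Hw Ha
      (Derive_correct _ _ Hf1 : is_derive _ _ (pd2 (pd1 f) x1 x2)) Hb
      (Derive_correct _ _ Hf2 : is_derive _ _ (pd2 (pd2 f) x1 x2))). }
  ring.
Qed.

Lemma generator_eq_divergence_form
    (d A1 A2 S11 S12 S22 dS11 dS12_1 dS12_2 dS22 l1 l2 f1 f2 f11 f12 f22 : R) :
  d <> 0 ->
  2 * A1 = dS11 + dS12_2 + S11 * l1 + S12 * l2 ->
  2 * A2 = dS12_1 + dS22 + S12 * l1 + S22 * l2 ->
  A1 * f1 + A2 * f2 + / 2 * (S11 * f11 + 2 * S12 * f12 + S22 * f22)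
  = / (2 * d) * (d * (l1 * (S11 * f1 + S12 * f2) + dS11 * f1 + S11 * f11 + dS12_1 * f2 + S12 * f12)
               + d * (l2 * (S12 * f1 + S22 * f2) + dS12_2 * f1 + S12 * f12 + dS22 * f2 + S22 * f22)).
Proof.
  intros Hd HA1 HA2.
  replace A1 with (/ 2 * (dS11 + dS12_2 + S11 * l1 + S12 * l2)) by lra.
  replace A2 with (/ 2 * (dS12_1 + dS22 + S12 * l1 + S22 * l2)) by lra.
  field; exact Hd.
Qed.

Lemma adc_drift_score (k1 k2 th1 th2 s1 s2 e1 g x1 x2 nu1 nu2 : R) :
  s1 <> 0 -> s2 <> 0 -> th1 <> 0 -> th2 <> 0 -> x1 <> 0 -> x2 <> 0 ->
  nu1 = 2 * k1 * th1 / s1 ^ 2 -> nu2 = 2 * k2 * th2 / s2 ^ 2 ->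
  2 * (k1 * (1 + e1 / s1 ^ 2 * x2) * (th1 - x1) + k2 * (g / s2 ^ 2) * x1 * (th2 - x2))
  = s1 ^ 2 + e1 * x2 + g * x1
    + (s1 ^ 2 * x1 + e1 * x1 * x2) * ((nu1 - 1) / x1 - nu1 / th1)
    + g * x1 * x2 * ((nu2 - 1) / x2 - nu2 / th2).
Proof. intros; subst nu1 nu2; field; repeat split; assumption. Qed.

Theorem mainTheorem3
  (k1 k2 th1 th2 s1 s2 e1 e2 g : R)
  (hk1 : 0 < k1) (hk2 : 0 < k2) (hth1 : 0 < th1) (hth2 : 0 < th2)
  (hs1 : 0 < s1) (hs2 : 0 < s2) (he1 : 0 <= e1) (he2 : 0 <= e2)
  (hg : - sqrt (e1 * e2) <= g <= sqrt (e1 * e2))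
  (f : R -> R -> R) (hf : smooth_on_quadrant f)
  (x1 x2 : R) (hx : quadrant x1 x2) :
  let b1 := e1 / s1 ^ 2 in
  let b2 := e2 / s2 ^ 2 in
  let a1 := g / s1 ^ 2 in
  let a2 := g / s2 ^ 2 in
  let nu1 := 2 * k1 * th1 / s1 ^ 2 in
  let nu2 := 2 * k2 * th2 / s2 ^ 2 in
  let A1 := fun y1 y2 => k1 * (1 + b1 * y2) * (th1 - y1) + k2 * a2 * y1 * (th2 - y2) in
  let A2 := fun y1 y2 => k2 * (1 + b2 * y1) * (th2 - y2) + k1 * a1 * y2 * (th1 - y1) in
  let S11 := fun y1 y2 => s1 ^ 2 * y1 + e1 * y1 * y2 in
  let S12 := fun y1 y2 => g * y1 * y2 in
  let S22 := fun y1 y2 => s2 ^ 2 * y2 + e2 * y1 * y2 in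
  let dens := fun y1 y2 => gamma_density nu1 th1 y1 * gamma_density nu2 th2 y2 in
  let Lf := A1 x1 x2 * pd1 f x1 x2 + A2 x1 x2 * pd2 f x1 x2
            + / 2 * (S11 x1 x2 * pd1 (pd1 f) x1 x2 + 2 * S12 x1 x2 * pd2 (pd1 f) x1 x2
                     + S22 x1 x2 * pd2 (pd2 f) x1 x2) in
  let flux1 := fun y1 y2 => dens y1 y2 * (S11 y1 y2 * pd1 f y1 y2 + S12 y1 y2 * pd2 f y1 y2) in
  let flux2 := fun y1 y2 => dens y1 y2 * (S12 y1 y2 * pd1 f y1 y2 + S22 y1 y2 * pd2 f y1 y2) in
  Lf = / (2 * dens x1 x2) * (pd1 flux1 x1 x2 + pd2 flux2 x1 x2).
Proof.
  intros b1 b2 a1 a2 nu1 nu2 A1 A2 S11 S12 S22 dens Lf flux1 flux2.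
  pose proof hx as [hx1 hx2].
  assert (hnu1 : 0 < nu1) by (apply Rdiv_lt_0_compat; [nra | apply pow_lt; lra]).
  assert (hnu2 : 0 < nu2) by (apply Rdiv_lt_0_compat; [nra | apply pow_lt; lra]).
  destruct (hf (false :: nil) x1 x2 hx) as [hf1_1 [hf1_2 _]].
  destruct (hf (true :: nil) x1 x2 hx) as [hf2_1 [hf2_2 _]].
  unfold flux1, flux2, dens.
  rewrite (pd1_density_flux _ _ S11 S12 f x1 x2 _ (s1 ^ 2 + e1 * x2) (g * x2)
             (is_derive_gamma_density nu1 th1 x1 hth1 hx1)),
          (pd2_density_flux _ _ S12 S22 f x1 x2 _ (g * x1) (s2 ^ 2 + e2 * x1)
             (is_derive_gamma_density nu2 th2 x2 hth2 hx2)),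
          (smooth_on_quadrant_pd_comm f x1 x2 hf hx)
    by first [assumption | unfold S11, S12, S22; auto_derive; [exact I | ring]].
  apply generator_eq_divergence_form.
  - pose proof (gamma_density_pos nu1 th1 x1 hnu1 hth1).
    pose proof (gamma_density_pos nu2 th2 x2 hnu2 hth2); nra.
  - apply adc_drift_score; first [lra | reflexivity].
  - (* [A2] is [A1] with the two coordinates exchanged. *)
    pose proof (adc_drift_score k2 k1 th2 th1 s2 s1 e2 g x2 x1 nu2 nu1) as Hdrift.
    unfold A2, S12, S22, b2, a1; rewrite Hdrift by first [lra | reflexivity]; ring.
Qed.
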